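(* Let $\mathbb{X}$ be a reflexive Kadets-Klee real Banach space and $\mathbb{Y}$ any real Banach space (both of dimension greater than $1$). Let $T\in\mathbb{K}(\mathbb{X},\mathbb{Y})$ with $\|T\|=1$ be a smooth point of $\mathbb{K}(\mathbb{X},\mathbb{Y})$. Then for each $\epsilon>0$, $T$ admits a uniform $\epsilon$-BPB approximation $A\in\mathbb{L}(\mathbb{X},\mathbb{Y})$ with $A\neq T$.
   Context: $\mathbb{K}(\mathbb{X},\mathbb{Y})$ (resp. $\mathbb{L}(\mathbb{X},\mathbb{Y})$) denotes the compact (resp. bounded) linear operators with the operator norm; $S_{\mathbb{X}}$ is the unit sphere. $\mathbb{X}$ is Kadets-Klee if $x_n\to x$ weakly and $\|x_n\|\to\|x\|$ imply $\|x_n-x\|\to0$. A nonzero element $x$ of a Banach space $\mathbb{Z}$ is a smooth point if there is a unique $f\in\mathbb{Z}^*$ with $\|f\|=1$ and $f(x)=\|x\|$. For $T$ with $\|T\|=1$ and fixed $\epsilon>0$, an operator $A\in\mathbb{L}(\mathbb{X},\mathbb{Y})$ with $\|A\|=1$ is a uniform $\epsilon$-BPB approximation of $T$ if there exists $\delta(\epsilon)>0$ such that whenever $x_0\in S_{\mathbb{X}}$ satisfies $\|Tx_0\|>1-\delta(\epsilon)$, there exists $u_0\in S_{\mathbb{X}}$ with $\|Au_0\|=1$, $\|u_0-x_0\|<\epsilon$ and $\|A-T\|<\epsilon$. Such an $A$ is called nontrivial if $A\neq T$. *)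

From HB Require Import structures.
From mathcomp Require Import all_boot all_order all_algebra.
From mathcomp Require Import all_classical all_reals all_analysis.
Set Implicit Arguments. Unset Strict Implicit. Unset Printing Implicit Defensive.
Import Order.TTheory GRing.Theory Num.Theory.
Import numFieldNormedType.Exports.
Local Open Scope classical_set_scope.
Local Open Scope ring_scope.

Section Defs.
Variable R : realType.

Definition is_linear (U V : lmodType R) (f : U -> V) : Prop :=
  forall (a : R) (x y : U), f (a *: x + y) = a *: f x + f y.

Definition dim_gt1 (U : lmodType R) : Prop :=
  exists x y : U, forall a b : R, a *: x + b *: y = 0 -> a = 0 /\ b = 0.

Variables (X Y : normedModType R).

Definition unit_ball : set X := [set x | `|x| <= 1].

Definition bounded_linear (f : X -> Y) : Prop :=
  is_linear f /\ exists M : R, forall x, `|f x| <= M * `|x|.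

Definition opnorm (f : X -> Y) : R := sup [set `|f x| | x in unit_ball].

Definition compact_op (f : X -> Y) : Prop :=
  is_linear f /\ compact (closure (f @` unit_ball)).

Definition op_add (f g : X -> Y) : X -> Y := fun x => f x + g x.
Definition op_scale (a : R) (f : X -> Y) : X -> Y := fun x => a *: f x.

Definition Kdual (phi : (X -> Y) -> R) : Prop :=
  (forall (a : R) (S1 S2 : X -> Y), compact_op S1 -> compact_op S2 ->
     phi (op_add (op_scale a S1) S2) = a * phi S1 + phi S2) /\
  exists M : R, forall S, compact_op S -> `|phi S| <= M * opnorm S.

Definition Kdual_norm (phi : (X -> Y) -> R) : R :=
  sup [set `|phi S| | S in [set S | compact_op S /\ opnorm S <= 1]].

(* T is a smooth point of K(X,Y): T <> 0 and the norming functional of norm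
   one is unique (as a functional on K(X,Y)). *)
Definition smooth_point_K (T : X -> Y) : Prop :=
  compact_op T /\ T <> (fun _ => 0) /\
  exists phi, [/\ Kdual phi, Kdual_norm phi = 1, phi T = opnorm T &
    forall psi, Kdual psi -> Kdual_norm psi = 1 -> psi T = opnorm T ->
      forall S, compact_op S -> psi S = phi S].

Definition uniform_BPB_approx (T A : X -> Y) (eps : R) : Prop :=
  bounded_linear A /\ opnorm A = 1 /\
  exists delta : R, 0 < delta /\
    forall x0 : X, `|x0| = 1 -> `|T x0| > 1 - delta ->
      exists u0 : X, [/\ `|u0| = 1, `|A u0| = 1, `|u0 - x0| < eps &
                         opnorm (fun x => A x - T x) < eps].

End Defs.

Section DualDefs.
Variable R : realType.
Variable X : normedModType R.

Definition dual_elt (f : X -> R) : Prop :=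
  is_linear (f : X -> R^o) /\ exists M : R, forall x, `|f x| <= M * `|x|.

Definition dual_norm (f : X -> R) : R :=
  sup [set `|f x| | x in [set x : X | `|x| <= 1]].

Definition bidual_elt (Phi : (X -> R) -> R) : Prop :=
  (forall (a : R) (f g : X -> R), dual_elt f -> dual_elt g ->
     Phi (fun x => a * f x + g x) = a * Phi f + Phi g) /\
  exists M : R, forall f, dual_elt f -> `|Phi f| <= M * dual_norm f.

Definition reflexive_space : Prop :=
  forall Phi, bidual_elt Phi -> exists x : X, forall f, dual_elt f -> Phi f = f x.

Definition weak_cvg (u : nat -> X) (x : X) : Prop :=
  forall f, dual_elt f -> (fun n => f (u n)) @ \oo --> f x.

Definition kadets_klee : Prop :=
  forall (u : nat -> X) (x : X), weak_cvg u x ->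
    (fun n => `|u n|) @ \oo --> `|x| -> (fun n => `|u n - x|) @ \oo --> 0.

End DualDefs.

From HB Require Import structures.
From mathcomp Require Import all_boot all_order all_algebra.
From mathcomp Require Import all_classical all_reals all_analysis.
From mathcomp Require Import lra.
Import Order.TTheory GRing.Theory Num.Theory.
Import numFieldNormedType.Exports.
Local Open Scope classical_set_scope.
Local Open Scope ring_scope.
Set Implicit Arguments. Unset Strict Implicit. Unset Printing Implicit Defensive.

(* A compact operator on a reflexive space attains its norm, say at [x0].
   Smoothness of [T] in K(X,Y) makes [x0] the only norming point up to sign:
   two norming points [x1], [x2] yield two norming functionals [S |-> g (S xi)]
   on K(X,Y), which must coincide, and testing them on rank-one operators shows
   [x1 = +-x2].  So every weak cluster point of almost norming unit vectors is
   [+-x0], and the Kadets-Klee property upgrades this to norm proximity: for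
   some [delta], [|T x| > 1 - delta] forces [x] close to [x0] or [- x0].  It then
   suffices to perturb [T] into a contraction [A <> T] with [|A x0| = 1] and
   [|A - T| < eps]: take [(1 - l) T + l h0 (.) T x0], where [h0] norms [x0],
   unless [T] is that rank-one operator, in which case take [h0 (.) y1] for a
   unit vector [y1 <> T x0] close to [T x0] (this needs dim Y > 1).
   Norming functionals come from Hahn-Banach, proved via a pointwise minimal
   sublinear functional below the norm (Zorn), which is necessarily linear. *)

Section IsLinear.
Variables (R : realType) (U V : lmodType R) (f : U -> V).
Hypothesis fL : is_linear f.

Lemma is_linear0 : f 0 = 0.
Proof.
by have := fL 1 0 0; rewrite !scale1r addr0 => h; apply: (addrI (f 0)); rewrite addr0 -h.
Qed.

Lemma is_linearZ a x : f (a *: x) = a *: f x.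
Proof. by have := fL a x 0; rewrite addr0 is_linear0 addr0. Qed.

Lemma is_linearD x y : f (x + y) = f x + f y.
Proof. by have := fL 1 x y; rewrite !scale1r. Qed.

Lemma is_linearN x : f (- x) = - f x.
Proof. by rewrite -scaleN1r is_linearZ scaleN1r. Qed.

Lemma is_linearB x y : f (x - y) = f x - f y.
Proof. by rewrite is_linearD is_linearN. Qed.

End IsLinear.

Lemma is_linear_comb (R : realType) (U V : lmodType R) (f g : U -> V) (a b : R) :
  is_linear f -> is_linear g -> is_linear (fun x => a *: f x + b *: g x).
Proof.
move=> fL gL c x y; rewrite fL gL !scalerDr !scalerA [a * c]mulrC [b * c]mulrC.
by rewrite addrACA -!scalerA.
Qed.

Section Sublinear.
Variables (R : realType) (V : lmodType R).
Implicit Types (q : V -> R) (x y z : V).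

Definition sublinear q :=
  (forall x y, q (x + y) <= q x + q y) /\ (forall t x, 0 <= t -> q (t *: x) <= t * q x).

Lemma sublinear0 q : sublinear q -> q 0 = 0.
Proof.
move=> [qD qZ]; have := qZ 0 0 (lexx _); rewrite scale0r mul0r.
by have := qD 0 0; rewrite addr0; lra.
Qed.

Lemma sublinearZ q t x : sublinear q -> 0 <= t -> q (t *: x) = t * q x.
Proof.
move=> qS t0; have [_ qZ] := qS; apply/eqP; rewrite eq_le qZ //=.
have [->|tn0] := eqVneq t 0; first by rewrite scale0r mul0r sublinear0.
have := qZ t^-1 (t *: x); rewrite invr_ge0 scalerA mulVf // scale1r => /(_ t0) h.
by have := ler_wpM2l t0 h; rewrite mulrA mulfV // mul1r.
Qed.

Lemma sublinear_opp_le q x : sublinear q -> - q (- x) <= q x.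
Proof. by move=> qS; have := qS.1 x (- x); rewrite subrr sublinear0 //; lra. Qed.

(* [shrink q y] is a sublinear minorant of [q] with [shrink q y (- y) <= - q y];
   for a minimal [q] this gives [q (- y) = - q y], hence linearity. *)
Definition shrink q y z : R :=
  inf [set q (z + t *: y) - t * q y | t in [set t : R | 0 <= t]].

Lemma shrink_le q y z t : sublinear q -> 0 <= t -> shrink q y z <= q (z + t *: y) - t * q y.
Proof.
move=> qS t0; apply: ge_inf; last by exists t.
exists (- q (- z)) => _ [s s0 <-].
have := qS.1 (z + s *: y) (- z); rewrite addrAC subrr add0r sublinearZ //; lra.
Qed.

Lemma shrink_ge q y z c :
  (forall t, 0 <= t -> c <= q (z + t *: y) - t * q y) -> c <= shrink q y z.
Proof.
move=> h; apply: lb_le_inf; first by exists (q (z + 0 *: y) - 0 * q y); exists 0; rewrite /= ?inE.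
by move=> _ [s s0 <-]; exact: h.
Qed.

Lemma shrink_le_self q y z : sublinear q -> shrink q y z <= q z.
Proof. by move=> qS; have := shrink_le y z qS (lexx 0); rewrite scale0r addr0 mul0r subr0. Qed.

Lemma shrink_oppr q y : sublinear q -> shrink q y (- y) <= - q y.
Proof.
by move=> qS; have := shrink_le y (- y) qS ler01; rewrite scale1r addNr sublinear0 // mul1r sub0r.
Qed.

Lemma shrink_sublinear q y : sublinear q -> sublinear (shrink q y).
Proof.
move=> qS; split=> [a b|t x t0].
- have h t1 t2 : 0 <= t1 -> 0 <= t2 ->
      shrink q y (a + b) <= (q (a + t1 *: y) - t1 * q y) + (q (b + t2 *: y) - t2 * q y).
    move=> t1p t2p; apply: le_trans (shrink_le _ _ qS (addr_ge0 t1p t2p)) _.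
    have := qS.1 (a + t1 *: y) (b + t2 *: y); rewrite scalerDl addrACA; lra.
  suff : shrink q y (a + b) - shrink q y b <= shrink q y a by lra.
  apply: shrink_ge => t1 t1p; rewrite lerBlDr addrC -lerBlDl.
  by apply: shrink_ge => t2 t2p; rewrite lerBlDl addrC; exact: h.
- have [->|tn0] := eqVneq t 0.
    by rewrite scale0r mul0r (le_trans (shrink_le_self _ _ qS)) // sublinear0.
  have tp : 0 < t by rewrite lt_def tn0.
  rewrite -ler_pdivrMl //; apply: shrink_ge => s s0; rewrite ler_pdivrMl //.
  apply: le_trans (shrink_le _ _ qS (mulr_ge0 t0 s0)) _.
  rewrite -scalerA -scalerDr sublinearZ //; lra.
Qed.

Lemma sublinear_linear_of_shrink q : sublinear q -> (forall y z, q z <= shrink q y z) ->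
  forall a x y, q (a *: x + y) = a * q x + q y.
Proof.
move=> qS qmin; have qN x : q (- x) = - q x.
  have := le_trans (qmin x (- x)) (shrink_oppr x qS).
  by have := sublinear_opp_le (- x) qS; rewrite opprK; lra.
have qD x y : q (x + y) = q x + q y.
  apply/eqP; rewrite eq_le qS.1 /=.
  by have := qS.1 (- x) (- y); rewrite -opprD !qN; lra.
move=> a x y; rewrite qD; congr (_ + _).
have [a0|a0] := leP 0 a; first exact: sublinearZ.
by rewrite -[a]opprK scaleNr qN sublinearZ ?oppr_ge0 ?ltW //; lra.
Qed.

End Sublinear.

Section HahnBanach.
Variables (R : realType) (X : normedModType R) (x0 : X).
Implicit Types (q : X -> R) (z : X).

Lemma norm_sublinear : sublinear (fun z : X => `|z|).
Proof. by split=> [a b|t x t0]; [exact: ler_normD | rewrite normrZ ger0_norm]. Qed.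

(* A minimal element of this class is a linear functional norming [x0]. *)
Definition hb_admissible q :=
  [/\ sublinear q, (forall z, q z <= `|z|) & q (- x0) <= - `|x0|].

Lemma hb_admissible_ge q z : hb_admissible q -> - `|z| <= q z.
Proof.
move=> [qS qn _]; have := sublinear_opp_le z qS.
by have := qn (- z); rewrite normrN; lra.
Qed.

Lemma hb_admissible_shrink q y : hb_admissible q -> hb_admissible (shrink q y).
Proof.
move=> [qS qn qx0]; split; first exact: shrink_sublinear.
  by move=> z; exact: le_trans (shrink_le_self _ _ qS) (qn z).
exact: le_trans (shrink_le_self _ _ qS) qx0.
Qed.

Lemma hb_admissible_chain_inf (A : set (X -> R)) q0 : A q0 ->
  (forall q, A q -> hb_admissible q) ->
  total_on A (fun q1 q2 => forall z, q1 z <= q2 z) ->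
  hb_admissible (fun z => inf [set q z | q in A]).
Proof.
move=> Aq0 Aadm Atot; pose m z := inf [set q z | q in A].
have mle q z : A q -> m z <= q z.
  move=> Aq; apply: ge_inf; last by exists q.
  by exists (- `|z|) => _ [p Ap <-]; exact: hb_admissible_ge (Aadm p Ap).
have mge z c : (forall q, A q -> c <= q z) -> c <= m z.
  move=> h; apply: lb_le_inf; first by exists (q0 z), q0.
  by move=> _ [q Aq <-]; exact: h.
have [[q0D q0Z] q0n q0x] := Aadm q0 Aq0.
split; first split.
- move=> a b; have h q1 q2 : A q1 -> A q2 -> m (a + b) <= q1 a + q2 b.
    move=> Aq1 Aq2; have [[q1D _] _ _] := Aadm q1 Aq1; have [[q2D _] _ _] := Aadm q2 Aq2.
    case: (Atot q1 q2 Aq1 Aq2) => hq.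
    + by apply: le_trans (mle q1 _ Aq1) _; apply: le_trans (q1D a b) _; rewrite lerD2l hq.
    + by apply: le_trans (mle q2 _ Aq2) _; apply: le_trans (q2D a b) _; rewrite lerD2r hq.
  suff : m (a + b) - m b <= m a by lra.
  apply: (mge) => q1 Aq1; rewrite lerBlDr addrC -lerBlDl.
  by apply: (mge) => q2 Aq2; rewrite lerBlDl addrC; exact: h.
- move=> t x t0; have [->|tn0] := eqVneq t 0.
    rewrite scale0r mul0r; apply: le_trans (mle q0 _ Aq0) _.
    by rewrite (sublinear0 (conj q0D q0Z)).
  have tp : 0 < t by rewrite lt_def tn0.
  rewrite -ler_pdivrMl //; apply: (mge) => q Aq; rewrite ler_pdivrMl //.
  by apply: le_trans (mle q _ Aq) _; have [[_ qZ] _ _] := Aadm q Aq; exact: qZ.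
- by move=> z; exact: le_trans (mle q0 _ Aq0) (q0n z).
- exact: le_trans (mle q0 _ Aq0) q0x.
Qed.

Lemma hb_admissible_minimal : exists q, hb_admissible q /\
  forall p, hb_admissible p -> (forall z, p z <= q z) -> forall z, q z <= p z.
Proof.
have adm0 : hb_admissible (shrink (fun z => `|z|) x0).
  split; first exact: shrink_sublinear norm_sublinear.
    by move=> z; exact: shrink_le_self norm_sublinear.
  exact: shrink_oppr norm_sublinear.
pose T := {q : X -> R | hb_admissible q}.
pose below (s t : T) := `[< forall z, sval t z <= sval s z >].
have [t tmin] : exists t : T, premaximal below t.
  apply: (ZL_preorder (exist _ _ adm0)).
  - by move=> t; apply/asboolP => z.
  - by move=> r s t /asboolP h1 /asboolP h2; apply/asboolP => z; exact: le_trans (h2 z) (h1 z).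
  move=> A Atot; have [[t0 At0]|A0] := pselect (exists t, A t); last first.
    by exists (exist _ _ adm0) => s As; exfalso; apply: A0; exists s.
  have mP := @hb_admissible_chain_inf (sval @` A) (sval t0) (imageP _ At0).
  have {}mP : hb_admissible (fun z => inf [set q z | q in sval @` A]).
    apply: mP; first by move=> _ [s _ <-]; exact: svalP.
    move=> _ _ [s As <-] [t At <-].
    by case: (Atot s t As At) => /asboolP h; [right|left].
  exists (exist _ _ mP) => s As; apply/asboolP => z /=.
  apply: ge_inf; last by exists (sval s) => //; exists s.
  by exists (- `|z|) => _ [_ [p _ <-] <-]; exact: hb_admissible_ge (svalP p).
exists (sval t); split; first exact: svalP.
move=> p padm ple; have /asboolP// : below (exist _ _ padm) t.
by apply: tmin; apply/asboolP.
Qed.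

Lemma hahn_banach_norming : exists h : X -> R,
  [/\ dual_elt h, forall z, `|h z| <= `|z| & h x0 = `|x0|].
Proof.
have [q [[qS qn qx0] qmin]] := hb_admissible_minimal.
have qL := sublinear_linear_of_shrink qS (fun y => qmin _ (hb_admissible_shrink y (And3 qS qn qx0))
                                          (fun z => shrink_le_self y z qS)).
have qN z : q (- z) = - q z.
  by have := qL (-1) z 0; rewrite addr0 scaleN1r sublinear0 // addr0 mulN1r.
have qb z : `|q z| <= `|z|.
  by rewrite ler_norml qn andbT -lerNl -qN -normrN qn.
exists q; split => //.
- by split; [exact: qL | exists 1 => z; rewrite mul1r].
- by apply/eqP; rewrite eq_le qn /= -lerN2 -qN.
Qed.

End HahnBanach.

Section OperatorNorm.
Variables (R : realType) (X Y : normedModType R).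
Implicit Types (f : X -> Y) (x : X).

Lemma unit_ball0 : @unit_ball R X 0.
Proof. by rewrite /unit_ball /= normr0. Qed.

Lemma bound_of_unit_ball f (M : R) : is_linear f ->
  (forall x, `|x| <= 1 -> `|f x| <= M) -> forall x, `|f x| <= M * `|x|.
Proof.
move=> fL h x; have [->|xn0] := eqVneq x 0; first by rewrite is_linear0 // !normr0 mulr0.
have nx : 0 < `|x| by rewrite normr_gt0.
have nx1 : `| `|x|^-1 *: x| <= 1 by rewrite normrZ ger0_norm ?invr_ge0 // mulVf ?gt_eqF.
have := h _ nx1; rewrite is_linearZ // normrZ ger0_norm ?invr_ge0 //.
by rewrite -ler_pdivrMr // mulrC.
Qed.

Lemma opnorm_has_sup f : bounded_linear f -> has_sup [set `|f x| | x in @unit_ball R X].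
Proof.
move=> [_ [M hM]]; split; first by exists `|f 0|, 0; first exact: unit_ball0.
exists `|M| => _ [x bx <-]; apply: le_trans (hM x) _.
by apply: le_trans (ler_wpM2r (normr_ge0 _) (ler_norm M)) _; rewrite ler_piMr.
Qed.

Lemma opnorm_ub f x : bounded_linear f -> `|x| <= 1 -> `|f x| <= opnorm f.
Proof. by move=> fB bx; apply: (ub_le_sup (opnorm_has_sup fB).2); exists x. Qed.

Lemma opnorm_ge0 f : bounded_linear f -> 0 <= opnorm f.
Proof. by move=> fB; exact: le_trans (opnorm_ub fB unit_ball0). Qed.

Lemma norm_le_opnorm f x : bounded_linear f -> `|f x| <= opnorm f * `|x|.
Proof. by move=> fB; apply: bound_of_unit_ball fB.1 _ x => y; exact: opnorm_ub. Qed.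

Lemma opnorm_le f c : 0 <= c -> (forall x, `|f x| <= c * `|x|) -> opnorm f <= c.
Proof.
move=> c0 h; apply: ge_sup; first by exists `|f 0|, 0; first exact: unit_ball0.
by move=> _ [x bx <-]; apply: le_trans (h x) _; rewrite ler_piMr.
Qed.

Lemma opnorm_adherent f d : bounded_linear f -> 0 < d ->
  exists x, `|x| <= 1 /\ opnorm f - d < `|f x|.
Proof. by move=> fB d0; have [_ [x bx <-] hx] := sup_adherent d0 (opnorm_has_sup fB); exists x. Qed.

Lemma compact_op_bounded f : compact_op f -> bounded_linear f.
Proof.
move=> [fL cf]; split => //; have /pinfty_ex_gt0 [M M0 hM] := compact_bounded cf.
exists M; apply: bound_of_unit_ball => // x bx; apply/hM/subset_closure; exact: imageP.
Qed.

Lemma contraction_opnorm1 f x : is_linear f -> (forall z, `|f z| <= `|z|) ->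
  `|x| = 1 -> `|f x| = 1 -> bounded_linear f /\ opnorm f = 1.
Proof.
move=> fL fb nx nfx; have fB : bounded_linear f by split; last by exists 1 => z; rewrite mul1r.
split => //; apply/eqP; rewrite eq_le opnorm_le ?ler01 //=; last by move=> z; rewrite mul1r.
by rewrite -nfx opnorm_ub // nx.
Qed.

Lemma bounded_linear_cvg (I : Type) (F : set_system I) (FF : Filter F) f (u : I -> X) x :
  bounded_linear f -> u @ F --> x -> (fun i => f (u i)) @ F --> f x.
Proof.
move=> fB /cvgrPdist_lt hu; apply/cvgrPdist_lt => e e0.
have c1 : 0 < opnorm f + 1 by rewrite ltr_wpDl // opnorm_ge0.
apply: filterS (hu _ (divr_gt0 e0 c1)) => i hi.
rewrite -(is_linearB fB.1); apply: le_lt_trans (norm_le_opnorm (x - u i) fB) _.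
have o0 := opnorm_ge0 fB.
by rewrite ltr_pdivlMr // in hi; have := normr_ge0 (x - u i); nra.
Qed.

End OperatorNorm.

Section UltraLimits.
Variables (I : Type) (U : set_system I).
Hypothesis UU : UltraFilter U.

Lemma ultra_cvg_compact (T : topologicalType) (u : I -> T) (K : set T) :
  compact K -> (forall i, K (u i)) -> exists2 l, K l & u @ U --> l.
Proof.
move=> cK Ku; have [|l [Kl cl]] := cK (u @ U); first by rewrite /fmap /=; apply: filterE.
exists l => // B nB; have [//|UnB] := in_ultra_setVsetC (u @^-1` B) UU.
by have [z []] := cl (~` B) _ UnB nB.
Qed.

Lemma ultra_cvg_bounded (R : realType) (a : I -> R) (M : R) :
  (forall i, `|a i| <= M) -> exists l : R, a @ U --> l.
Proof.
move=> aM; have [|l _ al] := @ultra_cvg_compact _ a `[- M, M] (@segment_compact _ _ _).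
  by move=> i; rewrite /= in_itv /= -ler_norml.
by exists l.
Qed.

End UltraLimits.

Section Duals.
Variables (R : realType) (X : normedModType R).
Implicit Types (f : X -> R) (x z : X).

Lemma dual_eltZ f a x : dual_elt f -> f (a *: x) = a * f x.
Proof. by move=> fd; exact: is_linearZ fd.1 _ _. Qed.

Lemma dual_eltB f x z : dual_elt f -> f (x - z) = f x - f z.
Proof. by move=> fd; exact: is_linearB fd.1 _ _. Qed.

Lemma dual_norm_ge0 f : dual_elt f -> 0 <= dual_norm f.
Proof. exact: (@opnorm_ge0 R X R^o). Qed.

Lemma norm_le_dual_norm f x : dual_elt f -> `|f x| <= dual_norm f * `|x|.
Proof. exact: (@norm_le_opnorm R X R^o). Qed.

Lemma dual_separates z : (forall f, dual_elt f -> f z = 0) -> z = 0.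
Proof.
by move=> h; have [g [gd _ gz]] := hahn_banach_norming z; apply/normr0_eq0; rewrite -gz h.
Qed.

(* The ultralimit functional [f |-> lim_U f (x i)] lies in the bidual. *)
Lemma reflexive_weak_ultralim (I : Type) (U : set_system I) (x : I -> X) :
  UltraFilter U -> reflexive_space X -> (forall i, `|x i| <= 1) ->
  exists z, forall f, dual_elt f -> (fun i => f (x i)) @ U --> f z.
Proof.
move=> UU refl x1.
have fx_le f i : dual_elt f -> `|f (x i)| <= dual_norm f.
  by move=> fd; apply: le_trans (norm_le_dual_norm (x i) fd) _; rewrite ler_piMr ?dual_norm_ge0.
have fx_cvg f : dual_elt f -> (fun i => f (x i)) @ U --> lim ((fun i => f (x i)) @ U).
  move=> fd; have [l fl] := ultra_cvg_bounded UU (fun i => fx_le f i fd).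
  by rewrite (cvg_lim _ fl).
have Phi : bidual_elt (fun f => lim ((fun i => f (x i)) @ U)).
  split=> [a f g fd gd|].
    by apply: cvg_lim => //; apply: cvgD; [apply: cvgMl_tmp|]; exact: fx_cvg.
  exists 1 => f fd; rewrite mul1r ler_norml; apply/andP; split.
  - apply: (closed_cvg _ (@closed_ge _ _) _ _ (fx_cvg f fd)).
    by apply: filterE => i /=; have := fx_le f i fd; rewrite ler_norml => /andP[].
  - apply: (closed_cvg _ (@closed_le _ _) _ _ (fx_cvg f fd)).
    by apply: filterE => i /=; have := fx_le f i fd; rewrite ler_norml => /andP[].
have [z hz] := refl _ Phi.
by exists z => f fd; rewrite -hz //; exact: fx_cvg.
Qed.

End Duals.

Lemma dual_elt_comp (R : realType) (X Y : normedModType R) (T : X -> Y) (g : Y -> R) :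
  bounded_linear T -> dual_elt g -> dual_elt (fun x => g (T x)).
Proof.
move=> TB gd; split; first by move=> a x y /=; rewrite TB.1 gd.1.
exists (dual_norm g * opnorm T) => x; apply: le_trans (norm_le_dual_norm (T x) gd) _.
by rewrite -mulrA ler_wpM2l ?dual_norm_ge0 // norm_le_opnorm.
Qed.

Section NormingPoints.
Variables (R : realType) (X Y : normedModType R) (T : X -> Y).
Hypotheses (refl : reflexive_space X) (cT : compact_op T) (nT : opnorm T = 1).

Let TB : bounded_linear T := compact_op_bounded cT.

Lemma compact_op_contraction x : `|T x| <= `|x|.
Proof. by have := norm_le_opnorm x TB; rewrite nT mul1r. Qed.

Lemma almost_norming_cvg (x : nat -> X) : (forall n, `|x n| <= 1) ->
  (forall n, 1 - n.+1%:R^-1 < `|T (x n)|) -> (fun n => `|T (x n)|) @ \oo --> (1 : R).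
Proof.
move=> x1 xT; apply/cvgrPdist_lt => e e0; near=> n.
have Tx_le := le_trans (compact_op_contraction (x n)) (x1 n).
have Tx_gt := xT n; have ne : n.+1%:R^-1 < e.
  by near: n; exact: near_infty_natSinv_lt (PosNum e0).
by move: (n.+1%:R^-1 : R) Tx_gt ne => c *; rewrite ger0_norm; lra.
Unshelve. all: by end_near.
Qed.

(* Compactness of [T] upgrades the weak ultralimit [z] to [T x_i --> T z] in
   norm, so [T z] inherits the norm [1]. *)
Lemma norming_ultralim (I : Type) (U : set_system I) (x : I -> X) :
  UltraFilter U -> (forall i, `|x i| <= 1) -> (fun i => `|T (x i)|) @ U --> (1 : R) ->
  exists z, [/\ `|z| = 1, `|T z| = 1 & forall f, dual_elt f -> (fun i => f (x i)) @ U --> f z].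
Proof.
move=> UU x1 Tx1; have [z xz] := reflexive_weak_ultralim UU refl x1.
have Tx_cl i : closure (T @` @unit_ball R X) (T (x i)) by exact/subset_closure/imageP/x1.
have [y _ Txy] := ultra_cvg_compact UU cT.2 Tx_cl.
have yE : y = T z.
  apply/eqP; rewrite -subr_eq0; apply/eqP/dual_separates => g gd.
  have gTx := xz _ (dual_elt_comp TB gd).
  by rewrite (dual_eltB _ _ gd) (cvg_unique _ (bounded_linear_cvg _ gd Txy) gTx) ?subrr.
have ny : `|y| = 1 by exact: cvg_unique _ (cvg_norm Txy) Tx1.
have nz : `|z| <= 1.
  have [h [hd hb <-]] := hahn_banach_norming z.
  apply: (closed_cvg _ (@closed_le _ _) _ _ (xz h hd)); apply: filterE => i.
  exact: le_trans (ler_norm _) (le_trans (hb _) (x1 i)).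
exists z; split => //; last by rewrite -yE.
by apply/eqP; rewrite eq_le nz /= -ny yE compact_op_contraction.
Qed.

Lemma compact_op_norming : exists x0, `|x0| = 1 /\ `|T x0| = 1.
Proof.
have almost_norming n : exists y, `|y| <= 1 /\ 1 - n.+1%:R^-1 < `|T y|.
  have [|y] := opnorm_adherent (d := n.+1%:R^-1) TB; first by rewrite invr_gt0.
  by rewrite nT; exists y.
have [x xP] := choice almost_norming.
have x1 n := (xP n).1; have Tx1 := almost_norming_cvg x1 (fun n => (xP n).2).
have [U [UU oU]] := ultraFilterLemma (F := \oo) _.
have [z [nz nTz _]] := norming_ultralim UU x1 (cvg_trans (cvg_app _ oU) Tx1).
by exists z.
Qed.

End NormingPoints.

Lemma rank_one_compact (R : realType) (X Y : normedModType R) (h : X -> R) (y : Y) :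
  dual_elt h -> compact_op (fun x => h x *: y).
Proof.
move=> hd; split; first by move=> a x z /=; rewrite hd.1 scalerDl scalerA.
set K := (fun t : R => t *: y) @` `[- dual_norm h, dual_norm h].
have cK : compact K.
  apply: continuous_compact; last exact: segment_compact.
  by apply: continuous_subspaceT; exact: scalel_continuous.
apply: (subclosed_compact _ cK); first exact: closed_closure.
rewrite (closure_id K).1; last exact: compact_closed (@norm_hausdorff _ _) cK.
apply: closureS => _ [x x1 <-]; apply: imageP; rewrite /= in_itv /= -ler_norml.
by apply: le_trans (norm_le_dual_norm x hd) _; rewrite ler_piMr ?dual_norm_ge0.
Qed.

Section SmoothPoint.
Variables (R : realType) (X Y : normedModType R) (T : X -> Y).
Hypotheses (cT : compact_op T) (nT : opnorm T = 1).

Lemma eval_Kdual (x1 : X) (g : Y -> R) : `|x1| = 1 -> dual_elt g ->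
  (forall v, `|g v| <= `|v|) -> g (T x1) = 1 ->
  Kdual (fun S : X -> Y => g (S x1)) /\ Kdual_norm (fun S : X -> Y => g (S x1)) = 1.
Proof.
move=> nx1 gd g1 gTx1.
have gS_le S : compact_op S -> `|g (S x1)| <= opnorm S.
  move=> cS; apply: le_trans (g1 _) _.
  by have := norm_le_opnorm x1 (compact_op_bounded cS); rewrite nx1 mulr1.
have ball_T : [set S | compact_op S /\ opnorm S <= 1] T by split; rewrite ?nT.
split.
  split; first by move=> a S1 S2 _ _; rewrite /op_add /op_scale gd.1.
  by exists 1 => S cS; rewrite mul1r gS_le.
have ub : ubound [set `|g (S x1)| | S in [set S | compact_op S /\ opnorm S <= 1]] 1.
  by move=> _ [S [cS nS] <-]; exact: le_trans (gS_le _ cS) nS.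
apply/eqP; rewrite eq_le; apply/andP; split.
  by apply: (ge_sup _ ub); exists `|g (T x1)|, T.
have T_in : [set `|g (S x1)| | S in [set S | compact_op S /\ opnorm S <= 1]] `|g (T x1)|.
  by exists T.
by have := ub_le_sup (ex_intro _ 1 ub) T_in; rewrite gTx1 normr1.
Qed.

Lemma smooth_norming_unique x1 x2 : smooth_point_K T ->
  `|x1| = 1 -> `|T x1| = 1 -> `|x2| = 1 -> `|T x2| = 1 -> x1 = x2 \/ x1 = - x2.
Proof.
move=> [_ [_ [phi [_ _ _ phi_unique]]]] nx1 nTx1 nx2 nTx2.
have [g1 [g1d g11 g1Tx1]] := hahn_banach_norming (T x1).
have [g2 [g2d g21 g2Tx2]] := hahn_banach_norming (T x2).
rewrite nTx1 in g1Tx1; rewrite nTx2 in g2Tx2.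
have eval_eq S : compact_op S -> g1 (S x1) = g2 (S x2).
  have [k1 kn1] := eval_Kdual nx1 g1d g11 g1Tx1.
  have [k2 kn2] := eval_Kdual nx2 g2d g21 g2Tx2.
  have e1 := phi_unique _ k1 kn1; have e2 := phi_unique _ k2 kn2.
  rewrite /= g1Tx1 nT in e1; rewrite /= g2Tx2 nT in e2.
  by move=> cS; rewrite (e1 erefl S cS) (e2 erefl S cS).
set c := g2 (T x1).
have x1E : x1 = c *: x2.
  apply/eqP; rewrite -subr_eq0; apply/eqP/dual_separates => h hd.
  rewrite (dual_eltB _ _ hd) (dual_eltZ _ _ hd).
  have := eval_eq _ (rank_one_compact (T x1) hd).
  rewrite (dual_eltZ _ _ g1d) (dual_eltZ _ _ g2d) g1Tx1 -/c mulr1 => ->.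
  by rewrite mulrC subrr.
have : `|c| = 1 by have := nx1; rewrite x1E normrZ nx2 mulr1.
move/eqP; rewrite eqr_norml ler01 andbT => /orP[|] /eqP c1.
  by left; rewrite x1E c1 scale1r.
by right; rewrite x1E c1 scaleN1r.
Qed.

End SmoothPoint.

Lemma not_cvg_ultra (R : realType) (a : nat -> R) (l : R) : ~ (a @ \oo --> l) ->
  exists e, 0 < e /\ exists U, [/\ UltraFilter U, \oo `<=` U & U [set n | e <= `|l - a n|]].
Proof.
move=> nal; have [e e0 far] : exists2 e, 0 < e & forall N, exists n, (N <= n)%N /\ e <= `|l - a n|.
  apply: contrapT => nfar; apply: nal; apply/cvgrPdist_lt => e e0.
  apply: contrapT => nnear; apply: nfar; exists e => // N.
  apply: contrapT => nN; apply: nnear; exists N => // n /= Nn.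
  by rewrite ltNge; apply/negP => en; apply: nN; exists n.
pose B N := [set n | (N <= n)%N /\ e <= `|l - a n|].
have BF : ProperFilter (filter_from [set: nat] B).
  apply: filter_from_proper; last by move=> N _; have [n] := far N; exists n.
  apply: filter_from_filter; first by exists 0%N.
  move=> i j _ _; exists (maxn i j) => // n [ijn en].
  by split; split => //; apply: leq_trans ijn; rewrite ?leq_maxl ?leq_maxr.
have [U [UU BU]] := ultraFilterLemma BF.
exists e; split => //; exists U; split => //.
  by move=> A [N _ NA]; apply: BU; exists N => // n [Nn _]; exact: NA.
by apply: BU; exists 0%N => // n [].
Qed.

Section Clustering.
Variables (R : realType) (X Y : normedModType R) (T : X -> Y).
Hypotheses (refl : reflexive_space X) (cT : compact_op T) (nT : opnorm T = 1)
  (sm : smooth_point_K T).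
Variables (x0 : X) (h0 : X -> R).
Hypotheses (nx0 : `|x0| = 1) (nTx0 : `|T x0| = 1) (h0d : dual_elt h0) (h0x0 : h0 x0 = 1).

(* Every weak cluster point of [w] is a norming point, hence [x0] or [- x0]
   by smoothness, and the sign condition rules out [- x0]. *)
Lemma almost_norming_weak_cvg (w : nat -> X) : (forall n, `|w n| <= 1) ->
  (fun n => `|T (w n)|) @ \oo --> (1 : R) -> (forall n, 0 <= h0 (w n)) -> weak_cvg w x0.
Proof.
move=> w1 Tw1 h0w f fd; apply: contrapT => /not_cvg_ultra [e [e0 [U [UU oU far]]]].
have [z [nz nTz wz]] := norming_ultralim refl cT nT UU w1 (cvg_trans (cvg_app _ oU) Tw1).
have zE : z = x0.
  have [//|zE] := smooth_norming_unique cT nT sm nz nTz nx0 nTx0.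
  have : 0 <= h0 z by apply: (closed_cvg _ (@closed_ge _ _) _ _ (wz h0 h0d)); exact: filterE.
  by rewrite zE -scaleN1r (dual_eltZ _ _ h0d) h0x0 mulr1 oppr_ge0 leNgt ltr01.
have /cvgrPdist_lt/(_ e e0) := wz f fd; rewrite zE => near_x0.
have [n [close_n far_n]] := filter_ex (filterI near_x0 far).
by move: far_n; rewrite /= leNgt close_n.
Qed.

(* Otherwise there are unit vectors [w n], signed so that [h0 (w n) >= 0], with
   [|T (w n)| --> 1] but [|w n - x0| >= eta]; they converge weakly to [x0] with
   constant norm, contradicting Kadets-Klee. *)
Lemma norming_clustering eta : kadets_klee X -> 0 < eta ->
  exists2 delta, 0 < delta & forall x, `|x| = 1 -> 1 - delta < `|T x| ->
    `|x - x0| < eta \/ `|x + x0| < eta.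
Proof.
move=> KK eta0; apply: contrapT => nclust.
have bad n : exists x, [/\ `|x| = 1, 1 - n.+1%:R^-1 < `|T x|,
                          eta <= `|x - x0| & eta <= `|x + x0|].
  apply: contrapT => nbad; apply: nclust; exists n.+1%:R^-1; first by rewrite invr_gt0.
  move=> x nx Tx; apply: contrapT => nclose; apply: nbad; exists x.
  by split; rewrite // leNgt; apply/negP => ?; apply: nclose; [left|right].
have [x xP] := choice bad.
pose w n := if 0 <= h0 (x n) then x n else - x n.
have wP n : [/\ `|w n| = 1, 1 - n.+1%:R^-1 < `|T (w n)|, 0 <= h0 (w n)
              & eta <= `|w n - x0|].
  have [nx Tx far_m far_p] := xP n; rewrite /w; case: ifPn => // h0x.
  have h0N : 0 <= h0 (- x n).
    by rewrite -scaleN1r (dual_eltZ _ _ h0d) mulN1r oppr_ge0 ltW // ltNge.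
  by rewrite normrN (is_linearN cT.1) normrN -opprD normrN.
have w1 n : `|w n| <= 1 by have [-> _ _ _] := wP n.
have Tw1 := almost_norming_cvg cT nT w1 (fun n => let: And4 _ Tw _ _ := wP n in Tw).
have wx0 := almost_norming_weak_cvg w1 Tw1 (fun n => let: And4 _ _ hw _ := wP n in hw).
have nw : (fun n => `|w n|) @ \oo --> `|x0|.
  by rewrite nx0 (_ : (fun n => _) = fun _ => 1) ?funeqE => [|n]; [exact: cvg_cst|case: (wP n)].
have /cvgr0Pnorm_lt/(_ eta eta0)/filter_ex [n] := KK w x0 wx0 nw.
by have [_ _ _ far] := wP n; rewrite ger0_norm // ltNge far.
Qed.

End Clustering.

Lemma dim_gt1_not_line (R : realType) (V : lmodType R) (y0 : V) :
  dim_gt1 V -> exists v : V, forall c : R, v <> c *: y0.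
Proof.
move=> [a [b ab_free]]; apply: contrapT => all_line.
have line v : exists c : R, v = c *: y0.
  by apply: contrapT => nline; apply: all_line; exists v => c vE; apply: nline; exists c.
have [ca aE] := line a; have [cb bE] := line b; rewrite {}aE {}bE in ab_free.
have [cb0 /eqP] : cb = 0 /\ - ca = 0.
  by apply: ab_free; rewrite !scalerA -scalerDl mulNr mulrC subrr scale0r.
rewrite oppr_eq0 => /eqP ca0; have := ab_free 1 0.
by rewrite ca0 !scale0r !scaler0 addr0 => /(_ erefl) [/eqP]; rewrite oner_eq0.
Qed.

Lemma exists_small_pos (R : realType) (eps : R) : 0 < eps ->
  exists r : R, [/\ 0 < r, r < 1 & 2 * r < eps].
Proof.
move=> eps0; have e3 : 0 < eps + 3 by lra.
exists (eps / (eps + 3)); rewrite divr_gt0 // ltr_pdivrMr // mul1r mulrA ltr_pdivrMr //.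
split => //; [lra | nra].
Qed.

(* [y1 := (y0 + t v) / |y0 + t v|] with [v] off the line of [y0] and [|t v| = r]. *)
Lemma unit_vector_near (R : realType) (Y : normedModType R) (y0 : Y) (e : R) :
  dim_gt1 Y -> `|y0| = 1 -> 0 < e ->
  exists y1, [/\ `|y1| = 1, y1 <> y0 & `|y1 - y0| < e].
Proof.
move=> Ygt1 ny0 e0; have [v v_off] := dim_gt1_not_line y0 Ygt1.
have v0 : 0 < `|v| by rewrite normr_gt0; apply/eqP => v0; apply: (v_off 0); rewrite v0 scale0r.
have [r [r0 r1 re]] := exists_small_pos e0.
pose t := r / `|v|; have t0 : 0 < t by rewrite divr_gt0.
have ntv : `|t *: v| = r by rewrite normrZ gtr0_norm // divfK // gt_eqF.
pose s := y0 + t *: v; have ns_r : `| `|s| - 1| <= r.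
  by rewrite -ny0; apply: le_trans (ler_dist_dist _ _) _; rewrite addrC addKr ntv.
have ns0 : 0 < `|s| by move: ns_r; rewrite ler_norml => /andP[]; lra.
exists (`|s|^-1 *: s); split.
- by rewrite normrZ gtr0_norm ?invr_gt0 // mulVf // gt_eqF.
- move=> y1E; apply: (v_off ((`|s| - 1) / t)).
  have sE : s = `|s| *: y0 by rewrite -y1E scalerA mulfV ?gt_eqF // scale1r.
  have tvE : t *: v = (`|s| - 1) *: y0 by rewrite scalerBl scale1r -sE addrC addKr.
  by rewrite mulrC -scalerA -tvE scalerA mulVf ?gt_eqF // scale1r.
- have -> : `|s|^-1 *: s - y0 = (`|s|^-1 - 1) *: s + t *: v.
    by rewrite scalerBl scale1r -addrA; congr (_ + _); rewrite opprD subrK.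
  apply: le_lt_trans (ler_normD _ _) _; rewrite normrZ ntv.
  rewrite -{2}(gtr0_norm ns0) -normrM mulrBl mulVf ?gt_eqF // mul1r distrC.
  lra.
Qed.

Section Perturbation.
Variables (R : realType) (X Y : normedModType R) (T : X -> Y) (x0 : X) (h0 : X -> R).
Hypotheses (TL : is_linear T) (T1 : forall x, `|T x| <= `|x|) (nTx0 : `|T x0| = 1).
Hypotheses (h0d : dual_elt h0) (h01 : forall x, `|h0 x| <= `|x|) (h0x0 : h0 x0 = 1).

Definition norming_perturbation (A : X -> Y) (eps : R) :=
  [/\ is_linear A, forall x, `|A x| <= `|x|, `|A x0| = 1,
      opnorm (fun x => A x - T x) < eps & A <> T].

Lemma norming_perturbation_convex eps : 0 < eps -> (exists x, T x <> h0 x *: T x0) ->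
  exists A, norming_perturbation A eps.
Proof.
move=> eps0 [x1 Tx1]; have [l [l0 l1 leps]] := exists_small_pos eps0.
pose A x := (1 - l) *: T x + l *: (h0 x *: T x0).
have ATE x : A x - T x = l *: (h0 x *: T x0 - T x).
  by rewrite /A scalerBl scale1r scalerBr addrAC (addrAC (T x)) subrr add0r addrC.
exists A; split.
- by apply: is_linear_comb => //; move=> a x y; rewrite h0d.1 scalerDl scalerA.
- move=> x; apply: le_trans (ler_normD _ _) _.
  have l1' : 0 <= 1 - l by rewrite subr_ge0 ltW.
  rewrite !normrZ (ger0_norm (ltW l0)) (ger0_norm l1') nTx0 mulr1.
  by have := ler_wpM2l l1' (T1 x); have := ler_wpM2l (ltW l0) (h01 x); lra.
- by rewrite /A h0x0 scale1r -scalerDl subrK scale1r.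
- apply: le_lt_trans leps; apply: opnorm_le; first by nra.
  move=> x; rewrite ATE normrZ (ger0_norm (ltW l0)) [2 * l]mulrC -mulrA.
  apply: ler_wpM2l; first exact: ltW.
  apply: le_trans (ler_normB _ _) _; rewrite normrZ nTx0 mulr1.
  by have := T1 x; have := h01 x; lra.
- move=> AT; apply: Tx1; have := ATE x1; rewrite AT subrr => /esym/eqP.
  by rewrite scaler_eq0 gt_eqF //= subr_eq0 => /eqP.
Qed.

Lemma norming_perturbation_rank_one eps : dim_gt1 Y -> 0 < eps ->
  (forall x, T x = h0 x *: T x0) -> exists A, norming_perturbation A eps.
Proof.
move=> Ygt1 eps0 TE; have [y1 [ny1 y1_neq y1_near]] := unit_vector_near Ygt1 nTx0 eps0.
exists (fun x => h0 x *: y1); split.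
- by move=> a x y; rewrite h0d.1 scalerDl scalerA.
- by move=> x; rewrite normrZ ny1 mulr1.
- by rewrite h0x0 scale1r.
- apply: le_lt_trans y1_near; apply: opnorm_le => // x.
  by rewrite TE -scalerBr normrZ mulrC ler_wpM2l.
- by move=> /(congr1 (fun A => A x0)); rewrite /= h0x0 scale1r.
Qed.

Lemma norming_perturbation_exists eps : dim_gt1 Y -> 0 < eps ->
  exists A, norming_perturbation A eps.
Proof.
move=> Ygt1 eps0; have [|] := pselect (exists x, T x <> h0 x *: T x0).
  exact: norming_perturbation_convex.
move=> /forallNP TE; apply: norming_perturbation_rank_one => // x.
exact: contrapT (TE x).
Qed.

End Perturbation.

Lemma uniform_BPB_of_clustering (R : realType) (X Y : normedModType R) (T A : X -> Y)
    (x0 : X) (eps : R) :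
  `|x0| = 1 -> norming_perturbation T x0 A eps ->
  (exists2 delta, 0 < delta & forall x, `|x| = 1 -> 1 - delta < `|T x| ->
     `|x - x0| < eps \/ `|x + x0| < eps) ->
  uniform_BPB_approx T A eps.
Proof.
move=> nx0 [AL A1 nAx0 AT _] [delta delta0 clust].
have [AB nA] := contraction_opnorm1 AL A1 nx0 nAx0.
split=> //; split=> //; exists delta; split=> // x nx Tx.
have [near_x0|near_Nx0] := clust x nx Tx; first by exists x0; rewrite distrC.
by exists (- x0); rewrite normrN (is_linearN AL) normrN -opprD normrN addrC.
Qed.

Theorem theorem2p6 (R : realType) (X Y : completeNormedModType R)
  (T : X -> Y) :
  reflexive_space X -> kadets_klee X -> dim_gt1 X -> dim_gt1 Y ->
  compact_op T -> opnorm T = 1 -> smooth_point_K T ->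
  forall eps : R, 0 < eps ->
    exists A : X -> Y, uniform_BPB_approx T A eps /\ A <> T.
Proof.
move=> refl KK _ Ygt1 cT nT sm eps eps0.
have [x0 [nx0 nTx0]] := compact_op_norming refl cT nT.
have [h0 [h0d h01 h0x0]] := hahn_banach_norming x0; rewrite nx0 in h0x0.
have [A pertA] := norming_perturbation_exists cT.1 (compact_op_contraction cT nT)
  nTx0 h0d h01 h0x0 Ygt1 eps0.
exists A; split; last by case: pertA.
apply: (uniform_BPB_of_clustering nx0 pertA).
exact: (norming_clustering refl cT nT sm nx0 nTx0 h0d h0x0 KK eps0).
Qed.
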